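(* Consider a credit-attribution game with authors $N=\{1,\dots,n\}$ and papers $P_1,\dots,P_m$, and let $p=(p_1,\dots,p_n)\in[0,1]^n$. For every author $x$, the Shapley values of $x$ in the reliability extensions (with parameters $p$) of the full credit game $\Gamma_{FC}$ and of the full obligation game $\Gamma_{FO}$ are \[ Sh[\overline{v_{FC}}](x)=p_{x}\sum_{k\in Pap_{x}} w_{k}\Big[\sum_{S\subseteq Auth_{k}\setminus \{x\}}\frac{ \Pi_{\emptyset,S} }{(n_{k}-|S|)\binom{n_k}{|S|}} \Big], \qquad Sh[\overline{v_{FO}}](x)= \sum_{k\in Pap_{x}} \frac{w_{k}}{n_{k}}\, \Pi_{Auth_{k},Auth_{k}}, \] where $n_k=|Auth_k|$.
   Context: A credit-attribution game consists of a set of authors $N=\{1,\dots,n\}$ and papers $P_1,\dots,P_m$; each paper $P_k$ has a nonempty author set $Auth_k\subseteq N$ and a weight $w_k\in\mathbb{R}_+$. $Pap_x$ is the set of (indices of) papers having $x$ as an author. The full credit game has $v_{FC}(S)=\sum$ of $w_k$ over papers $k$ with $Auth_k\cap S\ne\emptyset$; the full obligation game has $v_{FO}(S)=\sum$ of $w_k$ over papers $k$ with $Auth_k\subseteq S$. For $T\subseteq S\subseteq N$, $\Pi_{T,S}=\prod_{i\in T}p_i\prod_{i\in S\setminus T}(1-p_i)$ (empty products equal $1$). The reliability extension of $(N,v)$ with parameters $p$ is $(N,\overline v)$ with $\overline v(S)=\sum_{T\subseteq S}v(T)\Pi_{T,S}$. The Shapley value is $Sh[v](x)=\frac1{n!}\sum_{\pi}[v(S^x_\pi\cup\{x\})-v(S^x_\pi)]$,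 the sum over all permutations $\pi$ of $N$, with $S^x_\pi$ the set of players preceding $x$ in $\pi$. *)

From HB Require Import structures.
From mathcomp Require Import all_boot all_order all_algebra all_fingroup.
Set Implicit Arguments. Unset Strict Implicit. Unset Printing Implicit Defensive.
Import Order.TTheory GRing.Theory Num.Theory.
Local Open Scope ring_scope.

Section Defs.
Variables (R : realFieldType) (n m : nat).

Definition PiTS (p : 'I_n -> R) (T S : {set 'I_n}) : R :=
  (\prod_(i in T) p i) * \prod_(i in S :\: T) (1 - p i).

Definition rel_ext (p : 'I_n -> R) (v : {set 'I_n} -> R) (S : {set 'I_n}) : R :=
  \sum_(T : {set 'I_n} | T \subset S) v T * PiTS p T S.

(* players preceding x in the ordering pi (pi maps a player to its position) *)
Definition preceding (pi : {perm 'I_n}) (x : 'I_n) : {set 'I_n} :=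
  [set y | (pi y < pi x)%N].

Definition shapley (v : {set 'I_n} -> R) (x : 'I_n) : R :=
  (n`!)%:R^-1 *
  \sum_(pi : {perm 'I_n}) (v (preceding pi x :|: [set x]) - v (preceding pi x)).

Definition v_FC (Auth : 'I_m -> {set 'I_n}) (w : 'I_m -> R) (S : {set 'I_n}) : R :=
  \sum_(k | Auth k :&: S != set0) w k.
Definition v_FO (Auth : 'I_m -> {set 'I_n}) (w : 'I_m -> R) (S : {set 'I_n}) : R :=
  \sum_(k | Auth k \subset S) w k.

Definition Pap (Auth : 'I_m -> {set 'I_n}) (x : 'I_n) : {set 'I_m} :=
  [set k | x \in Auth k].

End Defs.

From HB Require Import structures.
From mathcomp Require Import all_boot all_order all_algebra all_fingroup.
From mathcomp Require Import ring.
Set Implicit Arguments. Unset Strict Implicit. Unset Printing Implicit Defensive.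
Import Order.TTheory GRing.Theory Num.Theory.
Local Open Scope ring_scope.

(* The reliability extension evaluates a game on a random sub-coalition of S
   keeping each i independently with probability p_i.  Hence v_FC and v_FO
   extend to sums over papers of w_k (1 - prod_(i in S :&: Auth k) (1 - p_i))
   and w_k [Auth k \subset S] prod_(i in Auth k) p_i, and the marginal
   contribution of x to its set X of predecessors only depends on X :&: Auth k.
   The Shapley value thus reduces to the law of X :&: A under a uniformly
   random ordering, for A = Auth k containing x.  Permuting A :\ x shows that the probability
   of X :&: A = S only depends on #|S|, and since in every ordering exactly
   one member of A has s predecessors in A, x has s of them with probability
   1 / #|A|.  Hence X :&: A = S with probability
   1 / (#|A| 'C(#|A| - 1, #|S|)) = 1 / ((#|A| - #|S|) 'C(#|A|, #|S|)). *)

Lemma sum_subset_prod (R : comPzSemiRingType) (I : finType) (S : {set I})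
    (f g : I -> R) :
  \sum_(T : {set I} | T \subset S) \prod_(i in T) f i * \prod_(i in S :\: T) g i
  = \prod_(i in S) (f i + g i).
Proof.
have -> : \prod_(i in S) (f i + g i) =
    \prod_i ((if i \in S then f i else 0) + (if i \in S then g i else 1)).
  by rewrite big_mkcond; apply: eq_bigr => i _; case: (i \in S); rewrite ?add0r.
rewrite bigA_distr [RHS](bigID (fun T : {set I} => T \subset S)) /=.
rewrite [X in _ = _ + X]big1 ?addr0 => [|T /subsetPn[i iT iNS]]; last first.
  by rewrite (bigD1 i) //= iT (negbTE iNS) mul0r.
apply: eq_bigr => T sTS; rewrite [RHS](bigID (mem T)) /=; congr (_ * _).
  by apply: eq_bigr => i iT; rewrite iT (subsetP sTS).
rewrite big_mkcond [RHS]big_mkcond; apply: eq_bigr => i _.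
by rewrite inE; case: (i \in T); case: (i \in S).
Qed.

Lemma prod_mask (R : comPzSemiRingType) (I : finType) (A X : {set I}) (g : I -> R) :
  \prod_(i in X) (if i \in A then 0 else g i)
  = (A :&: X == set0)%:R * \prod_(i in X) g i.
Proof.
have [AX0|/set0Pn[i /setIP[iA iX]]] := eqVneq (A :&: X) set0.
  rewrite mul1r; apply: eq_bigr => i iX; case: ifP => // iA.
  by have := in_set0 i; rewrite -AX0 inE iA iX.
by rewrite mul0r (bigD1 i) //= iA mul0r.
Qed.

Section Reliability.
Variables (R : realFieldType) (n : nat) (p : 'I_n -> R).

Lemma PiTS_set0 (S : {set 'I_n}) : PiTS p set0 S = \prod_(i in S) (1 - p i).
Proof. by rewrite /PiTS big_set0 mul1r setD0. Qed.

Lemma PiTS_id (A : {set 'I_n}) : PiTS p A A = \prod_(i in A) p i.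
Proof. by rewrite /PiTS setDv big_set0 mulr1. Qed.

Lemma rel_ext_disjoint (A S : {set 'I_n}) :
  rel_ext p (fun T => (A :&: T == set0)%:R) S = \prod_(i in S :&: A) (1 - p i).
Proof.
transitivity (\prod_(i in S) ((if i \in A then 0 else p i) + (1 - p i))).
  by rewrite -sum_subset_prod; apply: eq_bigr => T _; rewrite prod_mask /PiTS mulrA.
rewrite (big_setID A) /= [X in _ * X]big1 ?mulr1 => [|i /setDP[_ /negbTE->]].
  by apply: eq_bigr => i /setIP[_ ->]; rewrite add0r.
by rewrite subrKC.
Qed.

Lemma rel_ext1 (S : {set 'I_n}) : rel_ext p (fun=> 1) S = 1.
Proof.
transitivity (rel_ext p (fun T => (set0 :&: T == set0)%:R) S).
  by apply: eq_bigr => T _; rewrite set0I eqxx.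
by rewrite rel_ext_disjoint setI0 big_set0.
Qed.

Lemma rel_ext_meets (A S : {set 'I_n}) :
  rel_ext p (fun T => (A :&: T != set0)%:R) S = 1 - \prod_(i in S :&: A) (1 - p i).
Proof.
rewrite -rel_ext_disjoint -[X in _ = X - _](rel_ext1 S) -sumrB.
by apply: eq_bigr => T _; case: eqP; rewrite ?mul0r ?mul1r ?subr0 ?subrr.
Qed.

Lemma rel_ext_supset (A S : {set 'I_n}) :
  rel_ext p (fun T => (A \subset T)%:R) S = (A \subset S)%:R * \prod_(i in A) p i.
Proof.
have [sAS|nsAS] := boolP (A \subset S); last first.
  rewrite mul0r /rel_ext big1 // => T sTS.
  by rewrite (contraNF (fun sAT => subset_trans sAT sTS) nsAS) mul0r.
transitivity (\prod_(i in S) (p i + (if i \in A then 0 else 1 - p i))).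
  rewrite -sum_subset_prod; apply: eq_bigr => T sTS.
  by rewrite prod_mask /PiTS mulrCA setIDA (setIidPl sAS) setD_eq0.
rewrite mul1r (big_setID A) /= (setIidPr sAS).
rewrite [X in _ * X]big1 ?mulr1 => [|i /setDP[_ /negbTE->]]; last by rewrite subrKC.
by apply: eq_bigr => i ->; rewrite addr0.
Qed.

Lemma rel_ext_weighted (J : finType) (P : J -> pred {set 'I_n}) (w : J -> R) S :
  rel_ext p (fun T => \sum_(k | P k T) w k) S
  = \sum_k w k * rel_ext p (fun T => (P k T)%:R) S.
Proof.
rewrite /rel_ext; under eq_bigr do rewrite big_distrl /= big_mkcond /=.
rewrite exchange_big; apply: eq_bigr => k _; rewrite mulr_sumr; apply: eq_bigr => T _.
by case: (P k T); rewrite ?mul1r ?mul0r ?mulr0.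
Qed.

Variables (m : nat) (Auth : 'I_m -> {set 'I_n}) (w : 'I_m -> R).

Lemma rel_ext_FC S : rel_ext p (v_FC Auth w) S =
  \sum_k w k * (1 - \prod_(i in S :&: Auth k) (1 - p i)).
Proof.
rewrite (rel_ext_weighted (fun k T => Auth k :&: T != set0)).
by apply: eq_bigr => k _; rewrite rel_ext_meets.
Qed.

Lemma rel_ext_FO S : rel_ext p (v_FO Auth w) S =
  \sum_k w k * ((Auth k \subset S)%:R * \prod_(i in Auth k) p i).
Proof.
rewrite (rel_ext_weighted (fun k T => Auth k \subset T)).
by apply: eq_bigr => k _; rewrite rel_ext_supset.
Qed.

Lemma rel_ext_FC_marginal (X : {set 'I_n}) x : x \notin X ->
  rel_ext p (v_FC Auth w) (X :|: [set x]) - rel_ext p (v_FC Auth w) X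
  = p x * \sum_(k in Pap Auth x) w k * \prod_(i in X :&: Auth k) (1 - p i).
Proof.
move=> xNX; rewrite !rel_ext_FC -sumrB mulr_sumr [RHS]big_mkcond.
apply: eq_bigr => k _; rewrite inE setIUl.
have [xA|xNA] := boolP (x \in Auth k).
  rewrite [[set x] :&: _](setIidPl _) ?sub1set // setUC big_setU1 /=; first by ring.
  by rewrite inE negb_and xNX.
by rewrite [[set x] :&: _]disjoint_setI0 ?disjoints1 // setU0 subrr.
Qed.

Lemma rel_ext_FO_marginal (X : {set 'I_n}) x : x \notin X ->
  rel_ext p (v_FO Auth w) (X :|: [set x]) - rel_ext p (v_FO Auth w) X
  = \sum_(k in Pap Auth x) w k * \prod_(i in Auth k) p i * (Auth k :\ x \subset X)%:R.
Proof.
move=> xNX; rewrite !rel_ext_FO -sumrB [RHS]big_mkcond.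
apply: eq_bigr => k _; rewrite inE setUC -subDset.
have [xA|xNA] := boolP (x \in Auth k).
  have /negbTE-> : ~~ (Auth k \subset X) by apply: contra xNX => /subsetP->.
  by rewrite mul0r mulr0 subr0 mulrA mulrAC.
by rewrite (setDidPl _) ?subrr // disjoint_sym disjoints1.
Qed.

End Reliability.

Lemma exists_perm_on_imset (T : finType) (B S S' : {set T}) :
  S \subset B -> S' \subset B -> #|S| = #|S'| ->
  exists2 t : {perm T}, perm_on B t & t @: S = S'.
Proof.
move=> + sS'B; have [k] := ubnP #|S :\: S'|; elim: k S => // k IH S ltSk sSB eqSS'.
have [|/set0Pn[y /setDP[yS yNS']]] := eqVneq (S :\: S') set0.
  move/eqP; rewrite setD_eq0 => sSS'; exists 1%g; first exact: perm_on1.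
  by rewrite imset_perm1; apply/eqP; rewrite eqEcard sSS' eqSS' /=.
have /set0Pn[z /setDP[zS' zNS]] : S' :\: S != set0.
  rewrite -card_gt0 cardsD setIC -eqSS' -cardsD card_gt0.
  by apply/set0Pn; exists y; rewrite inE yS yNS'.
have yzB : perm_on B (tperm y z).
  apply: subset_trans (tperm_on y z) _.
  by rewrite subUset !sub1set (subsetP sSB) ?(subsetP sS'B).
have yzSE : (tperm y z @: S) :\: S' = (S :\: S') :\ y.
  apply/setP => i; rewrite -tpermV im_permV !inE.
  by case: tpermP => [->|->|/eqP-> _];
    rewrite ?eqxx ?(negbTE yNS') ?(negbTE zNS) ?zS' ?yS ?andbF.
have [|||t tB tyzS] := IH (tperm y z @: S).
- by move: ltSk; rewrite yzSE (cardsD1 y (S :\: S')) inE yS yNS'.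
- by rewrite -(im_perm_on yzB) imsetS.
- by rewrite card_imset //; apply: perm_inj.
exists (tperm y z * t)%g; first exact: perm_onM.
by rewrite -tyzS -imset_comp; apply: eq_imset => i; rewrite permM.
Qed.

Section PrecedingCounts.
Local Open Scope nat_scope.
Variable n : nat.
Implicit Types (A S : {set 'I_n}) (pi t : {perm 'I_n}) (x y : 'I_n).

Lemma preceding_notin pi x : x \notin preceding pi x.
Proof. by rewrite inE ltnn. Qed.

Lemma preceding_sub A x pi : preceding pi x :&: A \subset A :\ x.
Proof.
apply/subsetP => y; rewrite !inE andbC => /andP[-> ltyx].
by case: eqP ltyx => // ->; rewrite ltnn.
Qed.

Lemma preceding_mulg t pi y : preceding (t * pi)%g y = t @^-1: preceding pi (t y).
Proof. by apply/setP => z; rewrite !inE !permM. Qed.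

Lemma card_perm_mulg (P : pred {perm 'I_n}) t :
  #|[set pi | P (t * pi)%g]| = #|[set pi | P pi]|.
Proof.
have -> : [set pi | P (t * pi)%g] = mulg t @^-1: [set pi | P pi].
  by apply/setP => pi; rewrite !inE.
exact/card_preimset/mulgI.
Qed.

Lemma card_preceding_perm t A y (Q : pred {set 'I_n}) : t @: A = A ->
  #|[set pi | Q (preceding pi (t y) :&: A)]|
  = #|[set pi | Q (t @: (preceding pi y :&: A))]|.
Proof.
move=> tA; rewrite -(card_perm_mulg _ t^-1); apply: eq_card => pi.
by rewrite !inE preceding_mulg permK -preim_permV preimsetI !preim_permV tA.
Qed.

Definition prefix_count A x S := #|[set pi | preceding pi x :&: A == S]|.

Lemma prefix_count_perm_on A x S t :
  perm_on (A :\ x) t -> prefix_count A x (t @: S) = prefix_count A x S.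
Proof.
move=> tAx; have tA : t @: A = A.
  by apply: im_perm_on; apply: subset_trans tAx _; apply: subsetDl.
have tx : t x = x by apply: out_perm tAx _; rewrite setD11.
rewrite /prefix_count -{1}tx (card_preceding_perm x (fun X => X == t @: S) tA).
by apply: eq_card => pi; rewrite !inE (inj_eq (imset_inj perm_inj)).
Qed.

Lemma prefix_count_card A x S S' : S \subset A :\ x -> S' \subset A :\ x ->
  #|S| = #|S'| -> prefix_count A x S = prefix_count A x S'.
Proof.
move=> sSAx sS'Ax eqSS'.
by have [t tAx <-] := exists_perm_on_imset sSAx sS'Ax eqSS'; rewrite prefix_count_perm_on.
Qed.

Lemma card_preceding_lt A pi y z : y \in A -> pi y < pi z ->
  #|preceding pi y :&: A| < #|preceding pi z :&: A|.
Proof.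
move=> yA ltyz; apply/proper_card/properP; split; last by exists y; rewrite !inE ?ltyz ?ltnn.
by apply/subsetP => i; rewrite !inE => /andP[ltiy ->]; rewrite (ltn_trans ltiy ltyz).
Qed.

Lemma card_preceding_lt_card A pi y : y \in A -> #|preceding pi y :&: A| < #|A|.
Proof.
move=> yA; apply/proper_card/properP; split; first exact: subsetIr.
by exists y; rewrite // !inE ltnn.
Qed.

Lemma card_preceding_inj A pi :
  {in A &, injective (fun y => #|preceding pi y :&: A|)}.
Proof.
move=> y z yA zA eqyz; apply: (@perm_inj _ pi); apply: val_inj.
case: (ltngtP (pi y) (pi z)) => // [/(card_preceding_lt yA)|/(card_preceding_lt zA)].
all: by rewrite eqyz ltnn.
Qed.

Lemma card_preceding_fiber A pi s : s < #|A| ->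
  #|[set y in A | #|preceding pi y :&: A| == s]| = 1.
Proof.
move=> ltsA; set r := fun y => #|preceding pi y :&: A|.
have r_uniq : uniq (map r (enum A)).
  rewrite map_inj_in_uniq ?enum_uniq // => y z.
  by rewrite !mem_enum; apply: card_preceding_inj.
have r_sub : {subset map r (enum A) <= iota 0 #|A|}.
  move=> _ /mapP[y yA ->]; rewrite mem_enum in yA.
  by rewrite mem_iota add0n card_preceding_lt_card.
have r_size : size (iota 0 #|A|) <= size (map r (enum A)).
  by rewrite size_iota size_map -cardE.
have [_ /(_ s)] := uniq_min_size r_uniq r_sub r_size.
rewrite mem_iota ltsA => /mapP[y0]; rewrite mem_enum => y0A ry0.
apply: (eq_card1 (x := y0)) => y; rewrite !inE; apply/andP/eqP => [[yA /eqP]|->].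
  by rewrite ry0; apply: card_preceding_inj.
by rewrite y0A ry0 eqxx.
Qed.

Lemma card_perm_preceding_size A x s : x \in A -> s < #|A| ->
  #|A| * #|[set pi | #|preceding pi x :&: A| == s]| = n`!.
Proof.
move=> xA ltsA.
have size_sym y : y \in A -> #|[set pi | #|preceding pi y :&: A| == s]|
                             = #|[set pi | #|preceding pi x :&: A| == s]|.
  move=> yA; have yxA : tperm y x @: A = A.
    apply/im_perm_on/(subset_trans (tperm_on y x)).
    by rewrite subUset !sub1set yA xA.
  rewrite -[in RHS](tpermL y x) (card_preceding_perm y (fun X => #|X| == s) yxA).
  by apply: eq_card => pi; rewrite !inE card_imset //; apply: perm_inj.
rewrite -sum_nat_const -(eq_bigr _ size_sym) -card_Sn -sum1_card.
transitivity (\sum_pi #|[set y in A | #|preceding pi y :&: A| == s]|); last first.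
  by apply: eq_big => [pi|pi _]; rewrite ?inE ?card_preceding_fiber.
under eq_bigr do rewrite -sum1dep_card.
by rewrite (exchange_big_dep xpredT) //; apply: eq_bigr => pi _; rewrite sum1dep_card.
Qed.

Lemma sum_prefix_count A x s :
  \sum_(S : {set 'I_n} | (S \subset A :\ x) && (#|S| == s)) prefix_count A x S
  = #|[set pi | #|preceding pi x :&: A| == s]|.
Proof.
rewrite -sum1dep_card (partition_big (fun pi => preceding pi x :&: A)
  (fun S => (S \subset A :\ x) && (#|S| == s))) => [|pi /eqP<-]; last first.
  by rewrite preceding_sub eqxx.
apply: eq_bigr => S /andP[_ /eqP<-].
rewrite /prefix_count -sum1dep_card; apply: eq_bigl => pi.
by rewrite andb_idl // => /eqP->.
Qed.

Lemma prefix_count_fact A x S : x \in A -> S \subset A :\ x ->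
  (#|A| - #|S|) * 'C(#|A|, #|S|) * prefix_count A x S = n`!.
Proof.
move=> xA sSAx; have cardAx : #|A :\ x| = #|A|.-1 by rewrite (cardsD1 x A) xA.
have ltSA : #|S| < #|A|.
  rewrite (leq_ltn_trans (subset_leq_card sSAx)) // cardAx prednK // card_gt0.
  by apply/set0Pn; exists x.
rewrite -(card_perm_preceding_size xA ltSA) -sum_prefix_count.
rewrite (eq_bigr (fun _ => prefix_count A x S)) => [|S' /andP[sS'Ax /eqP eqS'S]].
  by rewrite sum_nat_cond_const cards_draws cardAx mulnA mul_bin_diag mul_bin_left.
exact: prefix_count_card.
Qed.

End PrecedingCounts.

Lemma sum_perm_preceding (R : numFieldType) n (A : {set 'I_n}) x
    (F : {set 'I_n} -> R) : x \in A ->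
  (n`!)%:R^-1 * \sum_(pi : {perm 'I_n}) F (preceding pi x :&: A)
  = \sum_(S : {set 'I_n} | S \subset A :\ x)
      F S / ((#|A| - #|S|)%:R * 'C(#|A|, #|S|)%:R).
Proof.
move=> xA; rewrite (partition_big (fun pi => preceding pi x :&: A)
  (fun S => S \subset A :\ x)) => [|pi _]; last exact: preceding_sub.
rewrite mulr_sumr; apply: eq_bigr => S sSAx.
rewrite (eq_bigr (fun _ => F S)) => [|pi /eqP-> //].
rewrite /= (eq_bigl (fun pi => pi \in [set pi | preceding pi x :&: A == S]));
  last by move=> pi; rewrite inE.
have nfact := prefix_count_fact xA sSAx; have := fact_gt0 n.
rewrite sumr_const -nfact !muln_gt0 => /andP[/andP[ltSA binA] count_gt0].
rewrite !natrM; field.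
by rewrite !pnatr_eq0 -!lt0n ltSA binA count_gt0.
Qed.

Lemma sum_perm_last (R : numFieldType) n (A : {set 'I_n}) x : x \in A ->
  (n`!)%:R^-1 * \sum_(pi : {perm 'I_n}) (A :\ x \subset preceding pi x)%:R
  = #|A|%:R^-1 :> R.
Proof.
move=> xA; rewrite (eq_bigr (fun pi => (A :\ x \subset preceding pi x :&: A)%:R)); last first.
  by move=> pi _; rewrite subsetI subsetDl andbT.
rewrite (sum_perm_preceding (fun S => (A :\ x \subset S)%:R) xA).
rewrite (bigD1 (A :\ x)) //= subxx big1 ?addr0 => [|S /andP[sSAx neS]].
  by rewrite (cardsD1 x A) xA add1n subSnn binSn !mul1r.
have /negbTE-> : ~~ (A :\ x \subset S).
  by apply: contra neS => sAxS; rewrite eqEsubset sSAx sAxS.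
by rewrite mul0r.
Qed.

Theorem theorem2 (R : realFieldType) (n m : nat)
  (Auth : 'I_m -> {set 'I_n}) (w : 'I_m -> R) (p : 'I_n -> R)
  (hAuth : forall k, Auth k != set0)
  (hw : forall k, 0 <= w k)
  (hp : forall i, 0 <= p i <= 1) (x : 'I_n) :
  shapley (rel_ext p (v_FC Auth w)) x =
    p x * \sum_(k in Pap Auth x)
            w k * \sum_(S : {set 'I_n} | S \subset Auth k :\ x)
                    PiTS p set0 S /
                    ((#|Auth k| - #|S|)%:R * 'C(#|Auth k|, #|S|)%:R)
  /\
  shapley (rel_ext p (v_FO Auth w)) x =
    \sum_(k in Pap Auth x) w k / #|Auth k|%:R * PiTS p (Auth k) (Auth k).
Proof.
rewrite /shapley; split.
  under eq_bigr => pi _ do rewrite (rel_ext_FC_marginal _ _ _ (preceding_notin pi x)).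
  rewrite -mulr_sumr mulrCA exchange_big /=; congr (p x * _); rewrite mulr_sumr.
  apply: eq_bigr => k; rewrite inE => xA; rewrite -mulr_sumr mulrCA.
  rewrite (sum_perm_preceding (fun S => \prod_(i in S) (1 - p i)) xA).
  by congr (w k * _); apply: eq_bigr => S _; rewrite PiTS_set0.
under eq_bigr => pi _ do rewrite (rel_ext_FO_marginal _ _ _ (preceding_notin pi x)).
rewrite exchange_big mulr_sumr; apply: eq_bigr => k; rewrite inE => xA.
by rewrite -mulr_sumr mulrCA sum_perm_last // PiTS_id mulrAC.
Qed.
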